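(* Let $\mathbb{X}$ be an infinite-dimensional (real or complex) Banach space and let $\mathcal{B}=(\mathbf{e}_n)_{n=1}^\infty$ be a semi-normalized quasi-greedy basis of $\mathbb{X}$. Then $C_w=1$ (i.e. $\|\mathcal{G}_N(x)\|\le\|x\|$ for every $x\in\mathbb{X}$, every $N\in\mathbb{N}$ and every choice of greedy set $\Lambda_N(x)$) if and only if $\mathcal{B}$ is unconditional with suppression unconditional constant $K_{su}=1$ (i.e. $\|P_A(x)\|\le\|x\|$ for every $x\in\mathbb{X}$ and every $A\subseteq\mathbb{N}$).
   Context: A basis $(\mathbf{e}_n)_{n=1}^\infty$ of a Banach space $\mathbb{X}$ is a Schauder basis; it is semi-normalized if $0<\inf_n\|\mathbf{e}_n\|\le\sup_n\|\mathbf{e}_n\|<\infty$. Let $(\mathbf{e}_n^* )_{n=1}^\infty$ be the biorthogonal (coordinate) functionals, so $x=\sum_n \mathbf{e}_n^*(x)\mathbf{e}_n$. For $x\in\mathbb{X}$ and $N\in\mathbb{N}$, a greedy set $\Lambda_N(x)$ is any set of $N$ indices with $\min\{|\mathbf{e}_j^*(x)|: j\in\Lambda_N(x)\}\ge\max\{|\mathbf{e}_j^*(x)|: j\notin\Lambda_N(x)\}$, and the greedy operator is $\mathcal{G}_N(x)=\sum_{j\in\Lambda_N(x)}\mathbf{e}_j^*(x)\mathbf{e}_j$. The basis is quasi-greedy if there is a constant $C$ with $\|\mathcal{G}_N(x)\|\le C\|x\|$ for all $x$, $N$ and all choices of greedy sets; $C_w$ denotes the smallest such $C$, and $C_t$ denotes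 the smallest constant $\tilde C$ with $\|x-\mathcal{G}_N(x)\|\le\tilde C\|x\|$ for all $x$, $N$ and choices of greedy sets. For $A\subseteq\mathbb{N}$, $P_A(x)=\sum_{n\in A}\mathbf{e}_n^*(x)\mathbf{e}_n$. The basis is unconditional if every expansion $\sum_n\mathbf{e}_n^*(x)\mathbf{e}_n$ converges to $x$ in any order; equivalently the $P_A$ are uniformly bounded, and the suppression unconditional constant $K_{su}$ is the smallest $K$ with $\|P_A(x)\|\le K\|x\|$ for all $x\in\mathbb{X}$, $A\subseteq\mathbb{N}$. *)

From HB Require Import structures.
From mathcomp Require Import all_boot all_order all_algebra.
From mathcomp Require Import all_classical all_reals all_analysis.
From mathcomp Require Export complex.
Set Implicit Arguments. Unset Strict Implicit. Unset Printing Implicit Defensive.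
Import Order.TTheory GRing.Theory Num.Theory.
Import numFieldNormedType.Exports.
Local Open Scope classical_set_scope.
Local Open Scope ring_scope.

Section Greedy.
Variables (K : numFieldType) (X : normedModType K).
Implicit Types (e : nat -> X) (es : nat -> X -> K).

Definition psum e (a : nat -> K) : nat -> X :=
  fun N => \sum_(0 <= n < N) a n *: e n.

Definition schauder_basis e es : Prop :=
  forall x : X,
    psum e (fun n => es n x) @ \oo --> x /\
    (forall a : nat -> K, psum e a @ \oo --> x -> a = (fun n => es n x)).

Definition semi_normalized e : Prop :=
  exists c C : K, 0 < c /\ forall n, c <= `|e n| <= C.

Definition greedy_set es (x : X) (N : nat) (s : seq nat) : Prop :=
  uniq s /\ size s = N /\
  forall i j, i \in s -> j \notin s -> `|es j x| <= `|es i x|.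

Definition greedy_op e es (x : X) (s : seq nat) : X :=
  \sum_(j <- s) es j x *: e j.

Definition quasi_greedy e es : Prop :=
  exists C : K, forall (x : X) (N : nat) (s : seq nat),
    greedy_set es x N s -> `|greedy_op e es x s| <= C * `|x|.

Definition Cw_one e es : Prop :=
  forall (x : X) (N : nat) (s : seq nat),
    greedy_set es x N s -> `|greedy_op e es x s| <= `|x|.

Definition unconditional e es : Prop :=
  forall (x : X) (sigma : nat -> nat), bijective sigma ->
    psum (e \o sigma) (fun n => es (sigma n) x) @ \oo --> x.

Definition proj_set e es (A : set nat) (x : X) : X :=
  limn (psum e (fun n => if `[< A n >] then es n x else 0)).

Definition Ksu_one e es : Prop :=
  forall (x : X) (A : set nat), `|proj_set e es A x| <= `|x|.

End Greedy.

From HB Require Import structures.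
From mathcomp Require Import all_boot all_order all_algebra.
From mathcomp Require Import all_classical all_reals all_analysis.
From mathcomp Require Import complex.
Import Order.TTheory GRing.Theory Num.Theory.
Import numFieldNormedType.Exports.
Local Open Scope classical_set_scope.
Local Open Scope ring_scope.

(* If C_w = 1, every finite coordinate projection P_s is contractive: scaling the
   coefficients of x on s by a large factor 1 + t turns s into a greedy set of
   y = x + t P_s x, and ||(1 + t) P_s x|| <= ||y|| <= ||x|| + t ||P_s x||.  Writing
   a permuted partial sum of x as P_B x with B covering [0, M), the tail estimate
   ||x - P_B x|| <= 2 ||x - S_M x|| gives unconditionality, and contractive
   projections on intervals make the partial sums of P_A x Cauchy, with norms at
   most ||x||.  Conversely, a greedy operator is a finite coordinate projection. *)

Lemma seq_lt_bound (s : seq nat) : exists M, forall j, j \in s -> (j < M)%N.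
Proof.
elim: s => [|a s [M HM]]; first by exists 0%N.
exists (maxn M a.+1) => j; rewrite in_cons => /orP[/eqP ->|/HM jM].
  by rewrite leq_max leqnn orbT.
by rewrite leq_max jM.
Qed.

Section FiniteProjections.
Variables (K : numFieldType) (X : normedModType K) (e : nat -> X).
Variable es : nat -> X -> K.

Lemma psum_stationary (a : nat -> K) M : (forall n, (M <= n)%N -> a n = 0) ->
  forall N, (M <= N)%N -> psum e a N = psum e a M.
Proof.
move=> a0 N MN; rewrite /psum [LHS](@big_cat_nat _ _ _ M) //=.
rewrite [X in _ + X]big_nat_cond [X in _ + X]big1 ?addr0 //.
by move=> n /andP[/andP[Mn _] _]; rewrite a0 // scale0r.
Qed.

Lemma greedy_op_psum s x M : uniq s -> (forall j, j \in s -> (j < M)%N) ->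
  greedy_op e es x s = psum e (fun n => if n \in s then es n x else 0) M.
Proof.
move=> us sM; rewrite /greedy_op /psum.
under [RHS]eq_bigr => n _ do rewrite (fun_if (fun c => c *: e n)) scale0r.
rewrite -big_mkcond /= -[RHS]big_filter.
apply: perm_big; apply: uniq_perm => //; first by rewrite filter_uniq // iota_uniq.
move=> j; rewrite mem_filter mem_index_iota /=.
by case: (boolP (j \in s)) => //= /sM ->.
Qed.

Lemma greedy_op_filter_neq0 x s :
  greedy_op e es x s = greedy_op e es x [seq j <- s | es j x != 0].
Proof.
rewrite /greedy_op big_filter [RHS]big_mkcond /=; apply: eq_bigr => j _.
by case: eqP => // ->; rewrite scale0r.
Qed.

Definition proj_coef (A : set nat) x n : K := if `[< A n >] then es n x else 0.

Lemma psum_filter_greedy_op (A : set nat) x N :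
  psum e (proj_coef A x) N =
  greedy_op e es x [seq n <- index_iota 0 N | `[< A n >]].
Proof.
rewrite /greedy_op big_filter big_mkcond /psum; apply: eq_bigr => n _.
by rewrite /proj_coef; case: ifP => _ //; rewrite scale0r.
Qed.

Lemma Ksu_one_Cw_one : Ksu_one e es -> Cw_one e es.
Proof.
move=> Ksu x N s [us _]; have [M HM] := seq_lt_bound s.
suff <- : proj_set e es [set j | j \in s] x = greedy_op e es x s by exact: Ksu.
rewrite (greedy_op_psum _ _ _ us HM) /proj_set.
under eq_fun => n do rewrite asboolb.
apply: lim_near_cst; first exact: norm_hausdorff.
exists M => // n /= Mn; apply: psum_stationary => // m Mm.
by case: ifP => // /HM; rewrite ltnNge Mm.
Qed.

End FiniteProjections.

Arguments proj_coef {K X}.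

Section SchauderBasis.
Variables (K : numFieldType) (X : normedModType K) (e : nat -> X).
Variable es : nat -> X -> K.
Hypothesis basis : schauder_basis e es.

Lemma coord_psum (a : nat -> K) M : (forall n, (M <= n)%N -> a n = 0) ->
  forall n, es n (psum e a M) = a n.
Proof.
move=> a0 n; have cvg_a : psum e a @ \oo --> psum e a M.
  by apply: cvg_near_cst; exists M => // N /= MN; exact: psum_stationary.
by rewrite [in RHS]((basis _).2 a cvg_a).
Qed.

Lemma coordDZ x y k n : es n (x + k *: y) = es n x + k * es n y.
Proof.
have cvg_xy : psum e (fun n => es n x + k * es n y) @ \oo --> x + k *: y.
  have -> : psum e (fun n => es n x + k * es n y) =
      (fun N => psum e (es^~ x) N + k *: psum e (es^~ y) N).
    apply: funext => N; rewrite /psum scaler_sumr -big_split /=.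
    by apply: eq_bigr => i _; rewrite scalerDl scalerA.
  by apply: cvgD; [exact: (basis x).1 | apply: cvgZ; [exact: cvg_cst | exact: (basis y).1]].
by have /(congr1 (fun f => f n)) /= <- := (basis _).2 _ cvg_xy.
Qed.

Lemma coord_greedy_op s x n : uniq s ->
  es n (greedy_op e es x s) = if n \in s then es n x else 0.
Proof.
move=> us; have [M HM] := seq_lt_bound s.
rewrite (@greedy_op_psum _ _ e es s x M us HM) coord_psum // => m Mm.
by case: ifP => // /HM; rewrite ltnNge Mm.
Qed.

Lemma coord_psum_trunc x M n :
  es n (psum e (es^~ x) M) = if (n < M)%N then es n x else 0.
Proof.
have -> : psum e (es^~ x) M = psum e (fun n => if (n < M)%N then es n x else 0) M.
  by apply: eq_big_nat => i /andP[_ ->].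
by rewrite coord_psum // => m; rewrite ltnNge => ->.
Qed.

(* Subtracting the partial sum S_M x only changes coordinates in [0, M), which B covers. *)
Lemma greedy_op_sub_psum x M B : uniq B -> (forall k, (k < M)%N -> k \in B) ->
  greedy_op e es (x - psum e (es^~ x) M) B =
  greedy_op e es x B - psum e (es^~ x) M.
Proof.
move=> uB covB; rewrite -scaleN1r /greedy_op.
under eq_bigr do rewrite coordDZ coord_psum_trunc scalerDl mulN1r scaleNr.
rewrite big_split /= sumrN scaleN1r; congr (_ - _).
under eq_bigr => j _ do rewrite (fun_if (fun c => c *: e j)) scale0r.
rewrite -big_mkcond -big_filter /psum; apply: perm_big; apply: uniq_perm.
- by rewrite filter_uniq.
- by rewrite iota_uniq.
move=> j; rewrite mem_filter mem_index_iota /=.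
by case: (ltnP j M) => //= /covB ->.
Qed.

Lemma coord_bounded : semi_normalized e ->
  forall x, exists B, 0 <= B /\ forall n, `|es n x| <= B.
Proof.
move=> [c [C [c0 hc]]] x.
have [M0 [M0r HM0]] := cvg_seq_bounded (cvgP _ (basis x).1).
have M0_lt : M0 < `|M0| + 1 by rewrite (le_lt_trans (real_ler_norm M0r)) // ltrDl.
set S := `|M0| + 1 in M0_lt.
have HS n : `|psum e (es^~ x) n| <= S by exact: HM0.
exists ((S + S) / c); split; first by rewrite divr_ge0 ?addr_ge0 // ltW.
move=> n; rewrite ler_pdivlMr //.
have term_n : es n x *: e n = psum e (es^~ x) n.+1 - psum e (es^~ x) n.
  by rewrite /psum big_nat_recr //= addrC addrK.
apply: le_trans _ (le_trans (ler_normB _ _) (lerD (HS n.+1) (HS n))).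
by rewrite -term_n normrZ ler_wpM2l //; case/andP: (hc n).
Qed.

Section CwOne.
Hypotheses (seminorm : semi_normalized e) (Cw : Cw_one e es).

Lemma Cw_one_greedy_op_neq0_le x s : uniq s -> (forall j, j \in s -> es j x != 0) ->
  `|greedy_op e es x s| <= `|x|.
Proof.
move=> us nz; have [B [B0 HB]] := coord_bounded seminorm x.
set u := greedy_op e es x s.
(* t makes |(1 + t) es i x| >= B >= |es j x| for every i in s. *)
set t := B * \sum_(j <- s) `|es j x|^-1.
have t0 : 0 <= t by rewrite mulr_ge0 // sumr_ge0 // => j _; rewrite invr_ge0.
set y := x + t *: u.
have coord_y n : es n y = if n \in s then (1 + t) * es n x else es n x.
  rewrite coordDZ coord_greedy_op //.
  by case: ifP => _; rewrite ?mulr0 ?addr0 // mulrDl mul1r mulrC.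
have greedy_s : greedy_set es y (size s) s.
  split=> //; split=> // i j si sj.
  rewrite !coord_y si (negbTE sj) normrM ger0_norm ?addr_ge0 //.
  apply: le_trans (HB j) _; rewrite mulrDl mul1r.
  apply: ler_wpDl => //; rewrite /t -mulrA -{1}(mulr1 B) ler_wpM2l //.
  rewrite (bigD1_seq i) //= mulrDl mulVf ?normr_eq0 ?nz //.
  by rewrite lerDl mulr_ge0 // sumr_ge0 // => k _; rewrite invr_ge0.
have greedy_y : greedy_op e es y s = (1 + t) *: u.
  rewrite /greedy_op /u /greedy_op scaler_sumr.
  by apply: eq_big_seq => j sj; rewrite coord_y sj scalerA.
have := Cw _ _ _ greedy_s; rewrite greedy_y normrZ ger0_norm ?addr_ge0 //.
move=> /le_trans /(_ (ler_normD _ _)); rewrite normrZ ger0_norm //.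
by rewrite mulrDl mul1r lerD2r.
Qed.

Lemma Cw_one_greedy_op_le x s : uniq s -> `|greedy_op e es x s| <= `|x|.
Proof.
move=> us; rewrite greedy_op_filter_neq0.
apply: Cw_one_greedy_op_neq0_le; first by rewrite filter_uniq.
by move=> j; rewrite mem_filter => /andP[].
Qed.

Lemma Cw_one_unconditional : unconditional e es.
Proof.
move=> x sigma [g sigmaK gK].
apply/cvgrPdist_le => eps eps0.
have [M _ /(_ M (leqnn M)) HM] :=
  (cvgrPdist_le _ _).1 (basis x).1 (eps / 2) (divr_gt0 eps0 (ltr0n _ 2)).
have [N0 HN0] := seq_lt_bound [seq g k | k <- iota 0 M].
exists N0 => // N /= N0N.
set B := map sigma (index_iota 0 N).
have uB : uniq B by rewrite map_inj_uniq ?iota_uniq //; exact: (can_inj sigmaK).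
have covB k : (k < M)%N -> k \in B.
  move=> kM; rewrite -[k]gK map_f // mem_index_iota /=.
  by apply: leq_trans N0N; apply: HN0; rewrite map_f // mem_iota.
have -> : psum (e \o sigma) (fun n => es (sigma n) x) N = greedy_op e es x B.
  by rewrite /psum /greedy_op big_map.
set r := x - psum e (es^~ x) M.
have -> : x - greedy_op e es x B = r - greedy_op e es r B.
  by rewrite greedy_op_sub_psum // /r opprB addrA subrK.
apply: le_trans (ler_normB _ _) _; rewrite [eps]splitr.
by apply: lerD; [|apply: le_trans (Cw_one_greedy_op_le _ _ uB) _]; exact: HM.
Qed.

Lemma Cw_one_psum_proj_le (A : set nat) x N :
  `|psum e (proj_coef es A x) N| <= `|x|.
Proof.
by rewrite psum_filter_greedy_op; apply: Cw_one_greedy_op_le; rewrite filter_uniq // iota_uniq.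
Qed.

(* The block S_N x - S_M x has the same coordinates as x on [M, N). *)
Lemma Cw_one_psum_proj_dist (A : set nat) x M N :
  `|psum e (proj_coef es A x) M - psum e (proj_coef es A x) N| <=
  `|psum e (es^~ x) M - psum e (es^~ x) N|.
Proof.
wlog MN : M N / (M <= N)%N.
  move=> wlog_MN; case: (leqP M N) => [/wlog_MN //|/ltnW NM].
  by rewrite distrC [X in _ <= X]distrC; exact: wlog_MN.
rewrite distrC [X in _ <= X]distrC.
pose z := psum e (fun n => if (M <= n < N)%N then es n x else 0) N.
have z_block : z = psum e (es^~ x) N - psum e (es^~ x) M.
  rewrite /z /psum [LHS](@big_cat_nat _ _ _ M) //= [in RHS](@big_cat_nat _ _ _ M 0 N) //=.
  rewrite [X in X + _]big_nat_cond [X in X + _]big1 ?add0r; last first.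
    by move=> n /andP[/andP[_ nM] _]; rewrite leqNgt nM scale0r.
  rewrite [RHS]addrC addKr; apply: eq_big_nat => n /andP[Mn nN].
  by rewrite Mn nN.
have coord_z n : (M <= n < N)%N -> es n z = es n x.
  move=> Hn; rewrite /z coord_psum ?Hn // => m Nm.
  by rewrite ltnNge Nm andbF.
have -> : psum e (proj_coef es A x) N - psum e (proj_coef es A x) M =
    greedy_op e es z [seq n <- index_iota M N | `[< A n >]].
  rewrite /psum (@big_cat_nat _ _ _ M 0 N) //= [LHS]addrC addKr.
  rewrite /greedy_op big_filter [RHS]big_mkcond.
  apply: eq_big_seq => n; rewrite mem_index_iota => Hn.
  by rewrite coord_z // /proj_coef; case: ifP => _ //; rewrite scale0r.
by rewrite -z_block; apply: Cw_one_greedy_op_le; rewrite filter_uniq // iota_uniq.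
Qed.

End CwOne.
End SchauderBasis.

Section Complete.
Variables (K : numFieldType) (X : completeNormedModType K) (e : nat -> X).
Variable es : nat -> X -> K.
Hypotheses (basis : schauder_basis e es) (seminorm : semi_normalized e).

Lemma Cw_one_Ksu_one : Cw_one e es -> Ksu_one e es.
Proof.
move=> Cw x A; set b := proj_coef es A x.
have cvg_b : cvg (psum e b @ \oo).
  apply/cauchy_cvgP/cauchy_ballP => eps eps0.
  have := (cauchy_ballP _).2 (@cvg_cauchy _ _ _ (cvgP _ (basis x).1)) eps eps0.
  move=> /(_ _ _) cauchy_x; rewrite !near_simpl /= in cauchy_x *.
  apply: filterS cauchy_x => -[M N] /=.
  rewrite -!ball_normE /ball_ /=.
  by apply: le_lt_trans; exact: Cw_one_psum_proj_dist.
change (`|limn (psum e b)| <= `|x|); apply/ler_addgt0Pr => eps eps0.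
have [N _ /(_ N (leqnn N)) HN] := (cvgrPdist_le _ _).1 cvg_b eps eps0.
rewrite -(subrK (psum e b N) (limn (psum e b))) addrC.
apply: le_trans (ler_normD _ _) _.
by apply: lerD; [exact: (Cw_one_psum_proj_le _ _ _ _ basis seminorm Cw) | exact: HN].
Qed.

Lemma Cw_oneE : Cw_one e es <-> unconditional e es /\ Ksu_one e es.
Proof.
split; last by move=> [_]; exact: Ksu_one_Cw_one.
move=> Cw; split; first exact: Cw_one_unconditional.
exact: Cw_one_Ksu_one.
Qed.

End Complete.

Theorem theorem2p1 :
  (forall (R : realType) (X : completeNormedModType R)
          (e : nat -> X) (es : nat -> X -> R),
      schauder_basis e es -> semi_normalized e -> quasi_greedy e es ->
      (Cw_one e es <-> unconditional e es /\ Ksu_one e es)) /\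
  (forall (R : realType) (X : completeNormedModType R[i])
          (e : nat -> X) (es : nat -> X -> R[i]),
      schauder_basis e es -> semi_normalized e -> quasi_greedy e es ->
      (Cw_one e es <-> unconditional e es /\ Ksu_one e es)).
Proof.
by split=> R X e es basis seminorm _; exact: Cw_oneE.
Qed.
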